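(* Let $p$ be a two-phase solution. At every point where $p\neq 0$ (so $\nu_1>0$), $$\begin{aligned} \Sigma_1&=-\tfrac12\tfrac{\nu_2}{\nu_1}+\Lambda_1,\\ \Sigma_2&=-\tfrac14\Lambda_1\tfrac{\nu_2}{\nu_1}-\tfrac14\nu_1+\tfrac{-\frac5{64}\Lambda_1^4+\frac38\Lambda_1^2\Lambda_2-\frac14\Lambda_2^2-\frac12\Lambda_1\Lambda_3+\Lambda_4}{\nu_1}+\tfrac12\Lambda_2+\tfrac18\Lambda_1^2,\\ \Sigma_3&=\tfrac14\nu_2+\big(\tfrac1{16}\Lambda_1^2-\tfrac14\Lambda_2\big)\tfrac{\nu_2}{\nu_1}-\tfrac14\Lambda_1\nu_1+\tfrac{\frac1{64}\Lambda_1^5-\frac18\Lambda_1^3\Lambda_2+\frac18\Lambda_1^2\Lambda_3+\frac14\Lambda_1\Lambda_2^2-\frac12\Lambda_2\Lambda_3+\Lambda_5}{\nu_1}+\tfrac12\Lambda_3,\\ \Sigma_4&=\tfrac18\Lambda_1\nu_2-\tfrac1{16}\tfrac{\nu_2^2}{\nu_1}-\tfrac1{16}\Lambda_1^2\nu_1+\big(-\tfrac1{32}\Lambda_1^3+\tfrac18\Lambda_1\Lambda_2-\tfrac14\Lambda_3\big)\tfrac{\nu_2}{\nu_1}\\ &\quad+\tfrac{-\frac1{256}\Lambda_1^6+\frac1{32}\Lambda_1^4\Lambda_2-\frac1{16}\Lambda_1^3\Lambda_3-\frac1{16}\Lambda_1^2\Lambda_2^2+\frac14\Lambda_1\Lambda_2\Lambda_3-\frac14\Lambda_3^2+\Lambda_6}{\nu_1}+\tfrac1{32}\Lambda_1^4-\tfrac18\Lambda_1^2\Lambda_2+\tfrac14\Lambda_1\Lambda_3.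 \end{aligned}$$
   Context: Let $p(x,t)$, $(x,t)\in\mathbb R^2$, be a smooth complex-valued solution of the focusing nonlinear Schrödinger equation $ip_t+p_{xx}+2|p|^2p=0$; $^*$ denotes complex conjugation and subscripts denote partial derivatives. Put $\mathbb U=\begin{pmatrix}-i\lambda& ip\\ ip^*& i\lambda\end{pmatrix}$ and $\mathbb V=\begin{pmatrix}-2i\lambda^2+i|p|^2& 2i\lambda p-p_x\\ 2i\lambda p^*+p^*_x& 2i\lambda^2-i|p|^2\end{pmatrix}$. The solution $p$ is called a two-phase solution if there exist real constants $c_0,c_1,c_2$ such that the matrix $\Psi=\begin{pmatrix}\Psi_{11}&\Psi_{12}\\ \Psi_{21}&-\Psi_{11}\end{pmatrix}$ with $\Psi_{11}=-i\lambda^3-ic_2\lambda^2+(\tfrac12 i|p|^2-ic_1)\lambda+\tfrac14(pp^*_x-p_xp^* )+\tfrac12 ic_2|p|^2-ic_0$, $\Psi_{12}=ip\lambda^2+(-\tfrac12p_x+ic_2p)\lambda-\tfrac14 ip_{xx}-\tfrac12 ip|p|^2-\tfrac12c_2p_x+ic_1p$, $\Psi_{21}=ip^*\lambda^2+(\tfrac12p^*_x+ic_2p^* )\lambda-\tfrac14 ip^*_{xx}-\tfrac12 ip^*|p|^2+\tfrac12c_2p^*_x+ic_1p^*$ satisfies $\Psi_x=[\mathbb U,\Psi]$ and $\Psi_t=[\mathbb V,\Psi]$ identically in $\lambda\in\mathbb C$. Set $\nu_1=|p|^2$ and $\nu_2=i(p^*p_x-pp^*_x)$ (both real). The polynomial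 $\mathscr R(\lambda)=-\Psi_{11}^2-\Psi_{12}\Psi_{21}$ is monic of degree 6 and independent of $(x,t)$; write $\mathscr R(\lambda)=\prod_{i=1}^6(\lambda-\lambda_i)$ and let $\Lambda_k$ denote the $k$-th elementary symmetric polynomial of $\lambda_1,\dots,\lambda_6$, so $\mathscr R(\lambda)=\sum_{k=0}^6(-1)^k\Lambda_k\lambda^{6-k}$ with $\Lambda_0=1$. At points where $p\neq0$ the Dirichlet eigenvalues $\mu_1,\mu_2$ are defined (up to order) by $\Psi_{12}(\lambda)=ip(\lambda-\mu_1)(\lambda-\mu_2)$, and $\Sigma_1,\dots,\Sigma_4$ denote the elementary symmetric polynomials of $\mu_1,\mu_2,\mu_1^*,\mu_2^*$, i.e. $(\mu-\mu_1)(\mu-\mu_2)(\mu-\mu_1^* )(\mu-\mu_2^* )=\mu^4-\Sigma_1\mu^3+\Sigma_2\mu^2-\Sigma_3\mu+\Sigma_4$. *)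

From Stdlib Require Import Reals List.
Import ListNotations.
Open Scope R_scope.

Record CC := mkC { Re : R; Im : R }.
Definition Cr (r : R) : CC := mkC r 0.
Definition C0 : CC := Cr 0.
Definition C1 : CC := Cr 1.
Definition Ci : CC := mkC 0 1.
Definition Cadd (z w : CC) : CC := mkC (Re z + Re w) (Im z + Im w).
Definition Copp (z : CC) : CC := mkC (- Re z) (- Im z).
Definition Csub (z w : CC) : CC := Cadd z (Copp w).
Definition Cmul (z w : CC) : CC :=
  mkC (Re z * Re w - Im z * Im w) (Re z * Im w + Im z * Re w).
Definition Cconj (z : CC) : CC := mkC (Re z) (- Im z).
Definition Cinv (z : CC) : CC :=
  mkC (Re z / (Re z * Re z + Im z * Im z)) (- Im z / (Re z * Re z + Im z * Im z)).
Definition Cdiv (z w : CC) : CC := Cmul z (Cinv w).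
Fixpoint Cpow (z : CC) (n : nat) : CC :=
  match n with O => C1 | S m => Cmul z (Cpow z m) end.

Declare Scope Cx_scope.
Delimit Scope Cx_scope with Cx.
Bind Scope Cx_scope with CC.
Infix "+" := Cadd : Cx_scope.
Infix "-" := Csub : Cx_scope.
Infix "*" := Cmul : Cx_scope.
Infix "/" := Cdiv : Cx_scope.
Notation "- z" := (Copp z) : Cx_scope.
Infix "^" := Cpow : Cx_scope.

Definition cont2 (f : R -> R -> R) : Prop :=
  forall x t eps, eps > 0 -> exists delta, delta > 0 /\
    forall y s, Rabs (y - x) < delta -> Rabs (s - t) < delta ->
      Rabs (f y s - f x t) < eps.

(* D i j is the partial derivative d_x^i d_t^j of p; p is CC^infinity:
   all these partial derivatives exist and are continuous. *)
Definition smooth_derivs (p : R -> R -> CC) (D : nat -> nat -> R -> R -> CC) : Prop :=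
  (forall x t, D 0%nat 0%nat x t = p x t) /\
  forall (i j : nat),
    cont2 (fun x t => Re (D i j x t)) /\ cont2 (fun x t => Im (D i j x t)) /\
    forall x t,
      derivable_pt_lim (fun y => Re (D i j y t)) x (Re (D (S i) j x t)) /\
      derivable_pt_lim (fun y => Im (D i j y t)) x (Im (D (S i) j x t)) /\
      derivable_pt_lim (fun s => Re (D i j x s)) t (Re (D i (S j) x t)) /\
      derivable_pt_lim (fun s => Im (D i j x s)) t (Im (D i (S j) x t)).

Definition pder_x (F : R -> R -> CC) (x t : R) (L : CC) : Prop :=
  derivable_pt_lim (fun y => Re (F y t)) x (Re L) /\
  derivable_pt_lim (fun y => Im (F y t)) x (Im L).
Definition pder_t (F : R -> R -> CC) (x t : R) (L : CC) : Prop :=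
  derivable_pt_lim (fun s => Re (F x s)) t (Re L) /\
  derivable_pt_lim (fun s => Im (F x s)) t (Im L).

Definition NLS (p : R -> R -> CC) (D : nat -> nat -> R -> R -> CC) : Prop :=
  forall x t, (Ci * D 0%nat 1%nat x t + D 2%nat 0%nat x t
               + Cr 2 * (p x t * Cconj (p x t)) * p x t)%Cx = C0.

Record M2 := mkM { m11 : CC; m12 : CC; m21 : CC; m22 : CC }.
Definition Mmul (A B : M2) : M2 :=
  mkM (m11 A * m11 B + m12 A * m21 B)%Cx (m11 A * m12 B + m12 A * m22 B)%Cx
      (m21 A * m11 B + m22 A * m21 B)%Cx (m21 A * m12 B + m22 A * m22 B)%Cx.
Definition Msub (A B : M2) : M2 :=
  mkM (m11 A - m11 B)%Cx (m12 A - m12 B)%Cx (m21 A - m21 B)%Cx (m22 A - m22 B)%Cx.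
Definition Mcomm (A B : M2) : M2 := Msub (Mmul A B) (Mmul B A).

Open Scope Cx_scope.

Definition Umat (p l : CC) : M2 :=
  mkM (- (Ci * l)) (Ci * p) (Ci * Cconj p) (Ci * l).

Definition Vmat (p px l : CC) : M2 :=
  mkM (- (Cr 2 * Ci * l ^ 2) + Ci * (p * Cconj p))
      (Cr 2 * Ci * l * p - px)
      (Cr 2 * Ci * l * Cconj p + Cconj px)
      (Cr 2 * Ci * l ^ 2 - Ci * (p * Cconj p)).

Definition Psi11 (p px pxx : CC) (c0 c1 c2 : R) (l : CC) : CC :=
  - (Ci * l ^ 3) - Ci * Cr c2 * l ^ 2
  + (Cr (1/2) * Ci * (p * Cconj p) - Ci * Cr c1) * l
  + Cr (1/4) * (p * Cconj px - px * Cconj p)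
  + Cr (1/2) * Ci * Cr c2 * (p * Cconj p) - Ci * Cr c0.

Definition Psi12 (p px pxx : CC) (c0 c1 c2 : R) (l : CC) : CC :=
  Ci * p * l ^ 2 + (- (Cr (1/2) * px) + Ci * Cr c2 * p) * l
  - Cr (1/4) * Ci * pxx - Cr (1/2) * Ci * p * (p * Cconj p)
  - Cr (1/2) * Cr c2 * px + Ci * Cr c1 * p.

Definition Psi21 (p px pxx : CC) (c0 c1 c2 : R) (l : CC) : CC :=
  Ci * Cconj p * l ^ 2 + (Cr (1/2) * Cconj px + Ci * Cr c2 * Cconj p) * l
  - Cr (1/4) * Ci * Cconj pxx - Cr (1/2) * Ci * Cconj p * (p * Cconj p)
  + Cr (1/2) * Cr c2 * Cconj px + Ci * Cr c1 * Cconj p.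

Definition PsiM (p px pxx : CC) (c0 c1 c2 : R) (l : CC) : M2 :=
  mkM (Psi11 p px pxx c0 c1 c2 l) (Psi12 p px pxx c0 c1 c2 l)
      (Psi21 p px pxx c0 c1 c2 l) (- Psi11 p px pxx c0 c1 c2 l).

Definition PsiAt (p : R -> R -> CC) (D : nat -> nat -> R -> R -> CC)
    (c0 c1 c2 : R) (x t : R) (l : CC) : M2 :=
  PsiM (p x t) (D 1%nat 0%nat x t) (D 2%nat 0%nat x t) c0 c1 c2 l.

Definition entries_pder (pd : (R -> R -> CC) -> R -> R -> CC -> Prop)
    (F : R -> R -> M2) (x t : R) (L : M2) : Prop :=
  pd (fun y s => m11 (F y s)) x t (m11 L) /\ pd (fun y s => m12 (F y s)) x t (m12 L) /\
  pd (fun y s => m21 (F y s)) x t (m21 L) /\ pd (fun y s => m22 (F y s)) x t (m22 L).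

Definition two_phase (p : R -> R -> CC) (D : nat -> nat -> R -> R -> CC)
    (c0 c1 c2 : R) : Prop :=
  forall (l : CC) (x t : R),
    entries_pder pder_x (fun y s => PsiAt p D c0 c1 c2 y s l) x t
      (Mcomm (Umat (p x t) l) (PsiAt p D c0 c1 c2 x t l)) /\
    entries_pder pder_t (fun y s => PsiAt p D c0 c1 c2 y s l) x t
      (Mcomm (Vmat (p x t) (D 1%nat 0%nat x t) l) (PsiAt p D c0 c1 c2 x t l)).

Definition Rpoly (P : M2) : CC := - (m11 P ^ 2) - m12 P * m21 P.

Fixpoint esym (s : list CC) (k : nat) : CC :=
  match k with
  | O => C1
  | S k' => match s with
            | nil => C0
            | a :: s' => esym s' k + a * esym s' k'
            end
  end.

Definition prodlin (s : list CC) (z : CC) : CC :=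
  fold_right (fun a acc => (z - a) * acc) C1 s.

Close Scope Cx_scope.

(** The four identities are algebraic consequences of the two factorisations at
    the point (x,t).  Since Ψ21(λ) = -conj Ψ12(conj λ), the conjugates of μ1, μ2 are the
    roots of Ψ21, so Vieta's formulas express μ1 + μ2, μ1 μ2 and their conjugates
    through the coefficients of Ψ12 and Ψ21 divided by i p and i p*.  Vieta's
    formulas for R(λ) = -Ψ11² - Ψ12 Ψ21 express Λ1, ..., Λ6 through the same
    coefficients and those of Ψ11.  Substituting both, p_xx and c0, c1, c2 cancel
    and what remains is a rational identity in p, p*, p_x, p_x*. *)

From Pilot Require Import Defs.
From Stdlib Require Import Reals List Lra Field.
Import ListNotations.
(* Re-imported so that [C1] is the complex unit rather than [Cos_rel.C1]. *)
Import Defs.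
Open Scope R_scope.

Lemma CC_eq (z w : CC) : Re z = Re w -> Im z = Im w -> z = w.
Proof. destruct z, w; simpl; intros -> ->; reflexivity. Qed.

Lemma CC_eq0 (z : CC) : Re z = 0 -> Im z = 0 -> z = C0.
Proof. intros; apply CC_eq; assumption. Qed.

Lemma CC_field_theory :
  field_theory C0 C1 Cadd Cmul Csub Copp Cdiv Cinv (@eq CC).
Proof.
  constructor; [constructor | | reflexivity | ]; intros.
  all: try (apply CC_eq; unfold C0, C1, Cr; simpl; ring).
  - intro E; apply (f_equal Re) in E; unfold C0, C1, Cr in E; simpl in E; lra.
  - destruct p as [a b].
    assert (Hn : a * a + b * b <> 0).
    { intro E; apply H; assert (a = 0) by nra; assert (b = 0) by nra; subst; reflexivity. }
    apply CC_eq; unfold C1, Cr; simpl; field; exact Hn.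
Qed.

Add Field CC_field : CC_field_theory.

Lemma poly6_coeffs_eq0_R (d0 d1 d2 d3 d4 d5 d6 : R) :
  (forall r : R, d0 + r * (d1 + r * (d2 + r * (d3 + r * (d4 + r * (d5 + r * d6)))))
                 = 0) ->
  d0 = 0 /\ d1 = 0 /\ d2 = 0 /\ d3 = 0 /\ d4 = 0 /\ d5 = 0 /\ d6 = 0.
Proof.
  intro H.
  pose proof (H 0); pose proof (H 1); pose proof (H (-1)); pose proof (H 2);
  pose proof (H (-2)); pose proof (H 3); pose proof (H (-3)).
  repeat split; lra.
Qed.

Open Scope Cx_scope.

Lemma poly6_coeffs_eq0 (d0 d1 d2 d3 d4 d5 d6 : CC) :
  (forall l : CC, d0 + l * (d1 + l * (d2 + l * (d3 + l * (d4 + l * (d5 + l * d6)))))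
                  = C0) ->
  d0 = C0 /\ d1 = C0 /\ d2 = C0 /\ d3 = C0 /\ d4 = C0 /\ d5 = C0 /\ d6 = C0.
Proof.
  intro H.
  assert (HRe := poly6_coeffs_eq0_R (Re d0) (Re d1) (Re d2) (Re d3) (Re d4) (Re d5) (Re d6)).
  assert (HIm := poly6_coeffs_eq0_R (Im d0) (Im d1) (Im d2) (Im d3) (Im d4) (Im d5) (Im d6)).
  destruct HRe as (? & ? & ? & ? & ? & ? & ?);
    [intro r; pose proof (f_equal Re (H (Cr r))) as E; simpl in E; rewrite <- E; ring |].
  destruct HIm as (? & ? & ? & ? & ? & ? & ?);
    [intro r; pose proof (f_equal Im (H (Cr r))) as E; simpl in E; rewrite <- E; ring |].
  repeat split; apply CC_eq0; assumption.
Qed.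

Lemma sub_eq_C0 (u v w : CC) : u = v -> w = u - v -> w = C0.
Proof. intros -> ->; ring. Qed.

Lemma Csub_eq0 (u v : CC) : u - v = C0 -> u = v.
Proof. intro H; transitivity (u - v + v); [ring | rewrite H; ring]. Qed.

Lemma Cadd_eq0 (u v : CC) : u + v = C0 -> v = - u.
Proof. intro H; transitivity (u + v - u); [ring | rewrite H; ring]. Qed.

Lemma quadratic_vieta (a b c m1 m2 : CC) : a <> C0 ->
  (forall l, a * l ^ 2 + b * l + c = a * (l - m1) * (l - m2)) ->
  m1 + m2 = - b / a /\ m1 * m2 = c / a.
Proof.
  intros Ha H.
  destruct (poly6_coeffs_eq0 (c - a * (m1 * m2)) (b + a * (m1 + m2)) C0 C0 C0 C0 C0)
    as (H0 & H1 & _).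
  { intro l; eapply sub_eq_C0; [apply (H l) | cbn [Cpow]; ring]. }
  apply Csub_eq0 in H0; apply Cadd_eq0 in H1.
  split; [rewrite <- H1 | rewrite H0]; field; exact Ha.
Qed.

Lemma sextic_vieta (l1 l2 l3 l4 l5 l6 a1 a2 a3 a4 a5 a6 : CC) :
  (forall l, l ^ 6 - a1 * l ^ 5 + a2 * l ^ 4 - a3 * l ^ 3 + a4 * l ^ 2 - a5 * l + a6
             = prodlin [l1; l2; l3; l4; l5; l6] l) ->
  let e := esym [l1; l2; l3; l4; l5; l6] in
  e 1%nat = a1 /\ e 2%nat = a2 /\ e 3%nat = a3 /\ e 4%nat = a4 /\
  e 5%nat = a5 /\ e 6%nat = a6.
Proof.
  intros H e.
  destruct (poly6_coeffs_eq0 (a6 - e 6%nat) (e 5%nat - a5) (a4 - e 4%nat) (e 3%nat - a3)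
              (a2 - e 2%nat) (e 1%nat - a1) C0) as (H6 & H5 & H4 & H3 & H2 & H1 & _).
  { intro l; eapply sub_eq_C0;
      [apply (H l) | unfold e, prodlin; cbn [Cpow esym fold_right]; ring]. }
  apply Csub_eq0 in H1, H2, H3, H4, H5, H6.
  repeat split; auto.
Qed.

Lemma Ci_sqr : Ci * Ci = - C1.
Proof. apply CC_eq; unfold C1, Cr; simpl; ring. Qed.

Lemma Ci_neq0 : Ci <> C0.
Proof. intro E; apply (f_equal Im) in E; simpl in E; lra. Qed.

Lemma Cconj_neq0 (z : CC) : z <> C0 -> Cconj z <> C0.
Proof.
  intros Hz E; apply Hz.
  apply (f_equal Re) in E as ERe; apply (f_equal Im) in E as EIm; simpl in ERe, EIm.
  apply CC_eq0; lra.
Qed.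

Lemma Cmul_neq0 (u v : CC) : u <> C0 -> v <> C0 -> u * v <> C0.
Proof.
  intros Hu Hv E; apply Hv.
  transitivity (Cinv u * (u * v)); [field; exact Hu | rewrite E; ring].
Qed.

Section PsiCoefficients.

Variables (p px pxx : CC) (c0 c1 c2 : R).

(* [psiij_k] is the coefficient of λ^k in Ψij. *)
Definition psi11_1 : CC := Cr (1/2) * Ci * (p * Cconj p) - Ci * Cr c1.
Definition psi11_0 : CC :=
  Cr (1/4) * (p * Cconj px - px * Cconj p) + Cr (1/2) * Ci * Cr c2 * (p * Cconj p)
  - Ci * Cr c0.
Definition psi12_1 : CC := - (Cr (1/2) * px) + Ci * Cr c2 * p.
Definition psi12_0 : CC :=
  - (Cr (1/4) * Ci * pxx) - Cr (1/2) * Ci * p * (p * Cconj p) - Cr (1/2) * Cr c2 * px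
  + Ci * Cr c1 * p.
Definition psi21_1 : CC := Cr (1/2) * Cconj px + Ci * Cr c2 * Cconj p.
Definition psi21_0 : CC :=
  - (Cr (1/4) * Ci * Cconj pxx) - Cr (1/2) * Ci * Cconj p * (p * Cconj p)
  + Cr (1/2) * Cr c2 * Cconj px + Ci * Cr c1 * Cconj p.

Lemma Psi12_expand (l : CC) :
  Psi12 p px pxx c0 c1 c2 l = Ci * p * l ^ 2 + psi12_1 * l + psi12_0.
Proof. unfold Psi12, psi12_1, psi12_0; ring. Qed.

Lemma Psi21_expand (l : CC) :
  Psi21 p px pxx c0 c1 c2 l = Ci * Cconj p * l ^ 2 + psi21_1 * l + psi21_0.
Proof. unfold Psi21, psi21_1, psi21_0; ring. Qed.

Lemma Psi21_eq_conj_Psi12 (l : CC) :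
  Psi21 p px pxx c0 c1 c2 l = - Cconj (Psi12 p px pxx c0 c1 c2 (Cconj l)).
Proof. unfold Psi21, Psi12; cbn [Cpow]; apply CC_eq; simpl; ring. Qed.

Definition Lambda (k : nat) : CC :=
  match k with
  | 1%nat => - (Cr c2 + Cr c2)
  | 2%nat => Cr c2 * Cr c2 + (C1 + C1) * Ci * psi11_1 + p * Cconj p
  | 3%nat => Ci * p * psi21_1 + Ci * Cconj p * psi12_1
            - (C1 + C1) * Ci * psi11_0 - (C1 + C1) * Ci * Cr c2 * psi11_1
  | 4%nat => (C1 + C1) * Ci * Cr c2 * psi11_0 - psi11_1 * psi11_1
            - Ci * p * psi21_0 - Ci * Cconj p * psi12_0 - psi12_1 * psi21_1
  | 5%nat => (C1 + C1) * psi11_1 * psi11_0 + psi12_1 * psi21_0 + psi12_0 * psi21_1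
  | 6%nat => - (psi11_0 * psi11_0) - psi12_0 * psi21_0
  | _ => C0
  end.

Lemma Rpoly_PsiM_expand (l : CC) :
  Rpoly (PsiM p px pxx c0 c1 c2 l)
  = l ^ 6 - Lambda 1 * l ^ 5 + Lambda 2 * l ^ 4 - Lambda 3 * l ^ 3
    + Lambda 4 * l ^ 2 - Lambda 5 * l + Lambda 6.
Proof.
  unfold Rpoly, PsiM, Psi11, Lambda, psi11_1, psi11_0; cbn [m11 m12 m21];
    rewrite Psi12_expand, Psi21_expand; cbn [Cpow]; ring [Ci_sqr].
Qed.

Lemma spectral_invariants (l1 l2 l3 l4 l5 l6 : CC) :
  (forall l, Rpoly (PsiM p px pxx c0 c1 c2 l) = prodlin [l1; l2; l3; l4; l5; l6] l) ->
  let L := esym [l1; l2; l3; l4; l5; l6] in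
  L 1%nat = Lambda 1 /\ L 2%nat = Lambda 2 /\ L 3%nat = Lambda 3 /\
  L 4%nat = Lambda 4 /\ L 5%nat = Lambda 5 /\ L 6%nat = Lambda 6.
Proof.
  intro HR; apply sextic_vieta; intro l; rewrite <- HR; symmetry; apply Rpoly_PsiM_expand.
Qed.

Hypothesis p_neq0 : p <> C0.

Section DirichletEigenvalues.

Variables mu1 mu2 : CC.

Hypothesis Psi12_factor :
  forall l, Psi12 p px pxx c0 c1 c2 l = Ci * p * (l - mu1) * (l - mu2).

Lemma Dirichlet_sum_prod :
  mu1 + mu2 = - psi12_1 / (Ci * p) /\ mu1 * mu2 = psi12_0 / (Ci * p).
Proof.
  apply quadratic_vieta; [exact (Cmul_neq0 _ _ Ci_neq0 p_neq0) |].
  intro l; rewrite <- Psi12_expand; apply Psi12_factor.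
Qed.

Lemma Psi21_factor (l : CC) :
  Psi21 p px pxx c0 c1 c2 l = Ci * Cconj p * (l - Cconj mu1) * (l - Cconj mu2).
Proof.
  rewrite Psi21_eq_conj_Psi12, Psi12_factor; apply CC_eq; simpl; ring.
Qed.

Lemma conj_Dirichlet_sum_prod :
  Cconj mu1 + Cconj mu2 = - psi21_1 / (Ci * Cconj p) /\
  Cconj mu1 * Cconj mu2 = psi21_0 / (Ci * Cconj p).
Proof.
  apply quadratic_vieta; [exact (Cmul_neq0 _ _ Ci_neq0 (Cconj_neq0 _ p_neq0)) |].
  intro l; rewrite <- Psi21_expand; apply Psi21_factor.
Qed.

End DirichletEigenvalues.

End PsiCoefficients.

Lemma esym4_pairs (a b c d : CC) :
  let e := esym [a; b; c; d] in
  e 1%nat = (a + b) + (c + d) /\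
  e 2%nat = a * b + c * d + (a + b) * (c + d) /\
  e 3%nat = (a + b) * (c * d) + (c + d) * (a * b) /\
  e 4%nat = (a * b) * (c * d).
Proof. cbn; repeat split; ring. Qed.

(* [field] treats [Cr r] as an opaque atom, so the dyadic constants are rewritten
   into the ring's own numerals. *)
Lemma Cr_1_2 : Cr (1/2) = C1 / (C1 + C1).
Proof. apply CC_eq; unfold C1, Cr; simpl; field. Qed.
Lemma Cr_1_4 : Cr (1/4) = C1 / (C1 + C1) ^ 2.
Proof. apply CC_eq; unfold C1, Cr; simpl; field. Qed.
Lemma Cr_1_8 : Cr (1/8) = C1 / (C1 + C1) ^ 3.
Proof. apply CC_eq; unfold C1, Cr; simpl; field. Qed.
Lemma Cr_1_16 : Cr (1/16) = C1 / (C1 + C1) ^ 4.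
Proof. apply CC_eq; unfold C1, Cr; simpl; field. Qed.
Lemma Cr_1_32 : Cr (1/32) = C1 / (C1 + C1) ^ 5.
Proof. apply CC_eq; unfold C1, Cr; simpl; field. Qed.
Lemma Cr_1_64 : Cr (1/64) = C1 / (C1 + C1) ^ 6.
Proof. apply CC_eq; unfold C1, Cr; simpl; field. Qed.
Lemma Cr_1_256 : Cr (1/256) = C1 / (C1 + C1) ^ 8.
Proof. apply CC_eq; unfold C1, Cr; simpl; field. Qed.
Lemma Cr_3_8 : Cr (3/8) = (C1 + C1 + C1) / (C1 + C1) ^ 3.
Proof. apply CC_eq; unfold C1, Cr; simpl; field. Qed.
Lemma Cr_5_64 : Cr (5/64) = ((C1 + C1) ^ 2 + C1) / (C1 + C1) ^ 6.
Proof. apply CC_eq; unfold C1, Cr; simpl; field. Qed.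

Theorem mainTheorem8
  (p : R -> R -> CC) (D : nat -> nat -> R -> R -> CC) (c0 c1 c2 : R)
  (Hsmooth : smooth_derivs p D) (Hnls : NLS p D) (Htwo : two_phase p D c0 c1 c2)
  (x t : R) (Hp : p x t <> C0)
  (l1 l2 l3 l4 l5 l6 : CC)
  (HR : forall l : CC, Rpoly (PsiAt p D c0 c1 c2 x t l)
                      = prodlin [l1; l2; l3; l4; l5; l6] l)
  (mu1 mu2 : CC)
  (Hmu : forall l : CC, m12 (PsiAt p D c0 c1 c2 x t l)
                       = Ci * p x t * (l - mu1) * (l - mu2)) :
  let nu1 := p x t * Cconj (p x t) in
  let nu2 := Ci * (Cconj (p x t) * D 1%nat 0%nat x t
                   - p x t * Cconj (D 1%nat 0%nat x t)) in
  let L := esym [l1; l2; l3; l4; l5; l6] in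
  let S := esym [mu1; mu2; Cconj mu1; Cconj mu2] in
  S 1%nat = - (Cr (1/2) * (nu2 / nu1)) + L 1%nat
  /\
  S 2%nat = - (Cr (1/4) * L 1%nat * (nu2 / nu1)) - Cr (1/4) * nu1
    + (- (Cr (5/64) * L 1%nat ^ 4) + Cr (3/8) * L 1%nat ^ 2 * L 2%nat
       - Cr (1/4) * L 2%nat ^ 2 - Cr (1/2) * L 1%nat * L 3%nat + L 4%nat) / nu1
    + Cr (1/2) * L 2%nat + Cr (1/8) * L 1%nat ^ 2
  /\
  S 3%nat = Cr (1/4) * nu2
    + (Cr (1/16) * L 1%nat ^ 2 - Cr (1/4) * L 2%nat) * (nu2 / nu1)
    - Cr (1/4) * L 1%nat * nu1
    + (Cr (1/64) * L 1%nat ^ 5 - Cr (1/8) * L 1%nat ^ 3 * L 2%nat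
       + Cr (1/8) * L 1%nat ^ 2 * L 3%nat + Cr (1/4) * L 1%nat * L 2%nat ^ 2
       - Cr (1/2) * L 2%nat * L 3%nat + L 5%nat) / nu1
    + Cr (1/2) * L 3%nat
  /\
  S 4%nat = Cr (1/8) * L 1%nat * nu2 - Cr (1/16) * (nu2 ^ 2 / nu1)
    - Cr (1/16) * L 1%nat ^ 2 * nu1
    + (- (Cr (1/32) * L 1%nat ^ 3) + Cr (1/8) * L 1%nat * L 2%nat
       - Cr (1/4) * L 3%nat) * (nu2 / nu1)
    + (- (Cr (1/256) * L 1%nat ^ 6) + Cr (1/32) * L 1%nat ^ 4 * L 2%nat
       - Cr (1/16) * L 1%nat ^ 3 * L 3%nat - Cr (1/16) * L 1%nat ^ 2 * L 2%nat ^ 2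
       + Cr (1/4) * L 1%nat * L 2%nat * L 3%nat - Cr (1/4) * L 3%nat ^ 2
       + L 6%nat) / nu1
    + Cr (1/32) * L 1%nat ^ 4 - Cr (1/8) * L 1%nat ^ 2 * L 2%nat
    + Cr (1/4) * L 1%nat * L 3%nat.
Proof.
  intros nu1 nu2 L S; subst nu1 nu2 L S.
  unfold PsiAt in HR, Hmu; cbn [m12 PsiM] in Hmu.
  destruct (Dirichlet_sum_prod _ _ _ _ _ _ Hp _ _ Hmu) as [Hsum Hprod].
  destruct (conj_Dirichlet_sum_prod _ _ _ _ _ _ Hp _ _ Hmu) as [Hsum' Hprod'].
  destruct (spectral_invariants _ _ _ _ _ _ _ _ _ _ _ _ HR)
    as (HL1 & HL2 & HL3 & HL4 & HL5 & HL6).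
  destruct (esym4_pairs mu1 mu2 (Cconj mu1) (Cconj mu2)) as (HS1 & HS2 & HS3 & HS4).
  rewrite HS1, HS2, HS3, HS4, Hsum, Hprod, Hsum', Hprod', HL1, HL2, HL3, HL4, HL5, HL6.
  unfold Lambda, psi11_1, psi11_0, psi12_1, psi12_0, psi21_1, psi21_0.
  rewrite ?Cr_1_2, ?Cr_1_4, ?Cr_1_8, ?Cr_1_16, ?Cr_1_32, ?Cr_1_64, ?Cr_1_256,
    ?Cr_3_8, ?Cr_5_64.
  cbn [Cpow].
  assert (Hp' := Cconj_neq0 _ Hp).
  repeat split; field [Ci_sqr]; repeat split; auto using Ci_neq0.
  (* The remaining side conditions are the nonvanishing of powers of 2, which
     [field] leaves as explicit complex literals. *)
  all: intro E; apply (f_equal Re) in E; unfold C0, Cr in E; simpl in E; lra.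
Qed.
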